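(* Let $V$ be a fixed finite set. If $\mu_1,\mu_2\colon\binom V2\to\mathbb{Z}_+$ satisfy $\mu_1(e)\leqslant\mu_2(e)$ for all $e\in\binom V2$, then $n(\mu_1,V)\leqslant n(\mu_2,V)$.
   Context: For a finite set $V$ with $|V|=n$ and $\mu\colon\binom V2\to\mathbb{Z}_+$, $n(\mu,V)=\sum_{J\subseteq V,|J|\geqslant2}(-1)^{n-|J|}\prod_{e\in\binom J2}\mu(e)+(-1)^{n-1}(n-1)$; this is the number of $(n-1)$-spheres in a wedge homotopy equivalent to the edge inflation $(\Delta_V)_\mu$ of the full simplex on $V$. *)

From mathcomp Require Import all_boot all_order all_algebra.
Set Implicit Arguments. Unset Strict Implicit. Unset Printing Implicit Defensive.
Import GRing.Theory Num.Theory.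
Local Open Scope ring_scope.

(* A multiplicity function mu : binom(V,2) -> Z_+ is represented as a function
   {set V} -> nat whose values on 2-element subsets are >= 1 (values elsewhere
   are irrelevant). *)
Definition is_edge (V : finType) (e : {set V}) : bool := #|e| == 2%N.

(* n(mu, V) = sum_{J subset V, |J| >= 2} (-1)^(n - |J|) prod_{e in binom(J,2)} mu(e)
              + (-1)^(n-1) (n-1),   with n = |V|.
   (-1)^(n-1) is written (-1)^(n+1), equal for all n, avoiding truncated subtraction. *)
Definition n_mu (V : finType) (mu : {set V} -> nat) : int :=
  \sum_(J : {set V} | (2 <= #|J|)%N)
     (-1) ^+ (#|V| - #|J|) * (\prod_(e : {set V} | (e \subset J) && is_edge e) (mu e)%:Z)
  + (-1) ^+ (#|V|.+1) * ((#|V|)%:Z - 1).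

From mathcomp Require Import all_boot all_order all_algebra.
Import GRing.Theory Num.Theory.
Local Open Scope ring_scope.

(* Put x_e = mu(e) - 1 >= 0 on edges.  Expanding prod_{e in binom(J,2)} (1 + x_e)
   over sets S of edges and exchanging sums, the coefficient of prod_{e in S} x_e
   in sum_J (-1)^(n-|J|) prod_{e in binom(J,2)} mu(e) is
   sum_{J >= cover S} (-1)^(n-|J|) = (1 - 1)^(n - |cover S|), i.e. 1 if S covers V
   and 0 otherwise.  The sets J with |J| < 2 contain no edge, so they only add a
   constant; hence n(mu, V) is, up to that constant, a polynomial in the x_e with
   nonnegative coefficients, and is monotone in mu. *)

Section SubsetExpansions.
Variable R : comPzRingType.

Lemma prodr1D (I : finType) (F : I -> R) :
  \prod_i (1 + F i) = \sum_(A : {set I}) \prod_(i in A) F i.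
Proof.
under eq_bigr do rewrite addrC.
rewrite bigA_distr; apply: eq_bigr => A _.
by rewrite [RHS]big_mkcond.
Qed.

Lemma prodr_nat_bool (I : finType) (P Q : pred I) :
  \prod_(i | P i) ((Q i)%:R : R) = [forall (i | P i), Q i]%:R.
Proof.
have [allQ | /forall_inPn[i Pi nQi]] := boolP [forall (i | P i), Q i].
  by apply: big1 => i Pi; rewrite (forall_inP allQ i Pi).
by rewrite (bigD1 i) //= (negbTE nQi) mul0r.
Qed.

Variable V : finType.

Lemma sign_compl_prod (J : {set V}) :
  (-1) ^+ (#|V| - #|J|) = \prod_i (if i \in J then 1 else - 1 : R).
Proof.
rewrite (bigID (mem J)) /= big1 => [|i -> //]; rewrite mul1r.
under eq_bigr => i /negbTE -> do [].
rewrite prodr_const -(cardsC J) addKn; congr (_ ^+ _).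
by apply: eq_card => i; rewrite !inE.
Qed.

Lemma sum_sign_supersets (A : {set V}) :
  \sum_(J : {set V}) (A \subset J)%:R * (-1) ^+ (#|V| - #|J|) = (A == setT)%:R :> R.
Proof.
transitivity (\prod_(i : V) (1 + - ((i \notin A)%:R : R))).
  rewrite bigA_distr; apply: eq_bigr => J _.
  rewrite sign_compl_prod.
  have [AJ | /subsetPn[i Ai nJi]] := boolP (A \subset J).
    rewrite mul1r; apply: eq_bigr => i _; case: ifP => // /negbT nJi.
    by rewrite (contra (subsetP AJ i) nJi).
  by rewrite mul0r (bigD1 i) //= (negbTE nJi) Ai oppr0 mul0r.
have one_sub_notin i : 1 + - ((i \notin A)%:R : R) = (i \in A)%:R.
  by case: (i \in A); rewrite ?subr0 ?subrr.
under eq_bigr do rewrite one_sub_notin.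
rewrite prodr_nat_bool -subTset; congr (nat_of_bool _)%:R.
by apply/forallP/subsetP => allA i; [move=> _; exact: allA | apply: allA].
Qed.

Lemma prod1D_subsets_cover (x : {set V} -> R) (J : {set V}) :
  \prod_(e : {set V} | e \subset J) (1 + x e)
  = \sum_(S : {set {set V}}) (cover S \subset J)%:R * \prod_(e in S) x e.
Proof.
transitivity (\prod_(e : {set V}) (1 + (e \subset J)%:R * x e)).
  rewrite big_mkcond; apply: eq_bigr => e _.
  by case: (e \subset J); rewrite ?mul1r ?mul0r ?addr0.
rewrite prodr1D; apply: eq_bigr => S _; rewrite big_split /= prodr_nat_bool.
by congr ((nat_of_bool _)%:R * _); apply/forall_inP/bigcupsP.
Qed.

Lemma sum_sign_prod1D_cover (x : {set V} -> R) :
  \sum_(J : {set V}) (-1) ^+ (#|V| - #|J|) * \prod_(e : {set V} | e \subset J) (1 + x e)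
  = \sum_(S : {set {set V}} | cover S == setT) \prod_(e in S) x e.
Proof.
under eq_bigr do rewrite prod1D_subsets_cover big_distrr /=.
rewrite exchange_big [RHS]big_mkcond /=; apply: eq_bigr => S _.
transitivity ((\sum_(J : {set V}) (cover S \subset J)%:R * (-1) ^+ (#|V| - #|J|))
              * \prod_(e in S) x e).
  by rewrite big_distrl; apply: eq_bigr => J _; rewrite mulrA [_ * _%:R]mulrC.
by rewrite sum_sign_supersets; case: (cover S == setT); rewrite ?mul1r ?mul0r.
Qed.
End SubsetExpansions.

Section CliqueSums.
Variable V : finType.
Implicit Type mu : {set V} -> nat.

Definition clique_weight mu (J : {set V}) : int :=
  \prod_(e : {set V} | (e \subset J) && is_edge e) (mu e)%:Z.

Definition alt_clique_sum mu : int :=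
  \sum_(J : {set V}) (-1) ^+ (#|V| - #|J|) * clique_weight mu J.

Definition edge_excess mu (e : {set V}) : int :=
  if is_edge e then (mu e)%:Z - 1 else 0.

Lemma clique_weight_small mu (J : {set V}) :
  (#|J| < 2)%N -> clique_weight mu J = 1.
Proof.
move=> small_J; apply: big1 => e /andP[eJ /eqP card_e].
by move: small_J; rewrite -card_e ltnNge subset_leq_card.
Qed.

Lemma n_muE mu :
  n_mu mu = alt_clique_sum mu
            - \sum_(J : {set V} | (#|J| < 2)%N) (-1) ^+ (#|V| - #|J|)
            + (-1) ^+ (#|V|.+1) * ((#|V|)%:Z - 1).
Proof.
rewrite /alt_clique_sum (bigID (fun J : {set V} => (2 <= #|J|)%N)) /=.
have -> : \sum_(J : {set V} | ~~ (2 <= #|J|)%N)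
            (-1) ^+ (#|V| - #|J|) * clique_weight mu J
        = \sum_(J : {set V} | (#|J| < 2)%N) (-1) ^+ (#|V| - #|J|).
  by apply: eq_big => J; rewrite -?ltnNge // => /clique_weight_small ->; rewrite mulr1.
by rewrite addrK.
Qed.

Lemma clique_weight_excess mu (J : {set V}) :
  clique_weight mu J = \prod_(e : {set V} | e \subset J) (1 + edge_excess mu e).
Proof.
rewrite [RHS](bigID (@is_edge V)) /= [X in _ * X]big1 ?mulr1 => [|e /andP[_]].
  by apply: eq_bigr => e /andP[_ edge_e]; rewrite /edge_excess edge_e addrC subrK.
by rewrite /edge_excess => /negbTE ->; rewrite addr0.
Qed.

Lemma alt_clique_sum_cover mu :
  alt_clique_sum mu
  = \sum_(S : {set {set V}} | cover S == setT) \prod_(e in S) edge_excess mu e.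
Proof.
rewrite -sum_sign_prod1D_cover; apply: eq_bigr => J _.
by rewrite clique_weight_excess.
Qed.
End CliqueSums.

Theorem corollary4p8 (V : finType) (mu1 mu2 : {set V} -> nat) :
  (forall e : {set V}, is_edge e -> (0 < mu1 e)%N) ->
  (forall e : {set V}, is_edge e -> (0 < mu2 e)%N) ->
  (forall e : {set V}, is_edge e -> (mu1 e <= mu2 e)%N) ->
  n_mu mu1 <= n_mu mu2.
Proof.
move=> mu1_gt0 _ le_mu12.
rewrite !n_muE !lerD2r !alt_clique_sum_cover.
apply: ler_sum => S _; apply: ler_prod => e _.
rewrite /edge_excess; case: ifP => // edge_e.
by rewrite subr_ge0 lerD2r !lez_nat mu1_gt0 ?le_mu12.
Qed.
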